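(* In the setting described in the context, for every edge state $\mathcal S=(S,\ell)$ with $S\subseteq I\times E$ and $\ell\in\{0,\dots,K\}^E$, the set $\Lambda(\mathcal S)=\{\lambda\ge0:\mathcal S(\lambda)=\mathcal S\}$ is convex.
   Context: Let $G=(V,E)$ be a directed graph and $I$ a finite set of commodities; commodity $i$ has source $s_i$, sink $t_i$, demand $d_i>0$. Flows are $x=(x_{i,e})\in\mathbb{R}^{I\times E}_{\ge0}$, feasible if for each $i$ they form an $s_i$–$t_i$ flow of value $d_i$; edge loads $x_e=\sum_ix_{i,e}$. The cost of edge $e$ under price $\lambda\ge0$ is $c^\lambda_e(x_e)=a_{e,k}x_e+b_{e,k}+g_e\lambda$ for $x_e\in[\sigma_{e,k},\sigma_{e,k+1})$, $k\in\{0,\dots,K\}$, with $0=\sigma_{e,0}<\dots<\sigma_{e,K}<\sigma_{e,K+1}=\infty$, $a_{e,k}>0$, $b_{e,k}\ge0$, $g_e\ge0$, such that $c^\lambda_e$ is continuous and strictly increasing; path costs are sums of edge costs; $\mathrm{WE}(\lambda)$ is the set of Wardrop equilibria (feasible flows using only minimum-cost paths per commodity). For each $\lambda$ the equilibrium edge loads $x_e$ are unique. Let $\phi_{i,v}(\lambda)$ be the length of a shortest $s_i$–$v$ path w.r.t. edge lengths $c^\lambda_e(x_e)$ for equilibrium loads $x_e$. The active support is $S(\lambda)=\{(i,e)\in I\times E: e=vw,\ c^\lambda_e(x_e)=\phi_{i,w}(\lambda)-\phi_{i,v}(\lambda)\}$, the vector of active function parts $\ell(\lambda)\in\{0,\dots,K\}^E$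 has $\ell_e$ the index with $x_e\in[\sigma_{e,\ell_e},\sigma_{e,\ell_e+1})$, and the edge state is $\mathcal S(\lambda)=(S(\lambda),\ell(\lambda))$. *)

From HB Require Import structures.
From mathcomp Require Import all_boot all_order all_algebra.
From mathcomp Require Import reals.

Set Implicit Arguments.
Unset Strict Implicit.
Unset Printing Implicit Defensive.

Import Order.TTheory GRing.Theory Num.Theory.
Local Open Scope ring_scope.

(* Edge cost functions are
   piecewise affine with breakpoints [sigma e 0 = 0 < ... < sigma e K]
   (and sigma_{e,K+1} = +oo), slopes [a e k], offsets [b e k] and
   price sensitivity [g e], for k = 0..K. *)

Section Network.
Variable R : realType.
Variables (V E I : finType) (tail head : E -> V).
Variables (src snk : I -> V) (dem : I -> R).
Variable K : nat.
Variables (sigma a b : E -> nat -> R) (g : E -> R).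

(* index k in {0..K} of the function part active at load x:
   the largest k with sigma e k <= x (for x >= 0 this is the unique k with
   x in [sigma_{e,k}, sigma_{e,k+1})). *)
Definition piece (e : E) (x : R) : 'I_K.+1 :=
  [arg max_(k > ord0 | sigma e k <= x) (k : nat)].

Definition cost (lam : R) (e : E) (x : R) : R :=
  a e (piece e x) * x + b e (piece e x) + g e * lam.

Definition load (x : I -> E -> R) (e : E) : R := \sum_(i : I) x i e.

Definition feasible (x : I -> E -> R) : Prop :=
  (forall i e, 0 <= x i e) /\
  (forall i v,
     \sum_(e | tail e == v) x i e - \sum_(e | head e == v) x i e
     = (if v == src i then dem i else 0) - (if v == snk i then dem i else 0)).

Fixpoint is_walk (u v : V) (p : seq E) : bool :=
  match p with
  | [::] => u == v
  | e :: p' => (tail e == u) && is_walk (head e) v p'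
  end.

Definition plen (c : E -> R) (p : seq E) : R := \sum_(e <- p) c e.

Definition is_dist (c : E -> R) (u v : V) (r : R) : Prop :=
  (exists p, is_walk u v p /\ plen c p = r) /\
  (forall p, is_walk u v p -> r <= plen c p).

Definition edge_costs (lam : R) (x : I -> E -> R) : E -> R :=
  fun e => cost lam e (load x e).

Definition tight (lam : R) (x : I -> E -> R) (i : I) (e : E) : Prop :=
  exists rv rw,
    is_dist (edge_costs lam x) (src i) (tail e) rv /\
    is_dist (edge_costs lam x) (src i) (head e) rw /\
    edge_costs lam x e = rw - rv.

(* Wardrop equilibrium: feasible, and commodity i only uses edges lying on
   shortest s_i-paths (potential characterisation of "only minimum-cost
   paths are used"). *)
Definition is_WE (lam : R) (x : I -> E -> R) : Prop :=
  feasible x /\ forall i e, 0 < x i e -> tight lam x i e.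

Definition has_state (lam : R) (x : I -> E -> R)
    (S : {set I * E}) (ell : {ffun E -> 'I_K.+1}) : Prop :=
  (forall i e, (i, e) \in S <-> tight lam x i e) /\
  (forall e, ell e = piece e (load x e)).

Definition Lambda (S : {set I * E}) (ell : {ffun E -> 'I_K.+1}) (lam : R)
  : Prop :=
  0 <= lam /\ exists x, is_WE lam x /\ has_state lam x S ell.

End Network.

From Pilot Require Import Defs.
From HB Require Import structures.
From mathcomp Require Import all_boot all_order all_algebra.
From mathcomp Require Import reals ring lra.
From Stdlib Require Import FunctionalExtensionality.
Import Order.TTheory GRing.Theory Num.Theory.
Set Implicit Arguments.
Unset Strict Implicit.
Unset Printing Implicit Defensive.
Local Open Scope ring_scope.

(* Take equilibria x1 at lam1 and x2 at lam2 with the same edge state (S, ell).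
   The loads at which a given function part is active form an interval, so the
   convex combination x of the flows keeps the parts ell, and on them the costs
   are affine in (lam, x_e): x has edge costs c = t c1 + (1 - t) c2.  The edges
   tight for c1 and for c2 coincide (both are given by S), so a c1-shortest walk
   is also c2-shortest and shortest-path distances combine convexly; an edge is
   then tight for c exactly when it is tight for c1 and c2, the slacks being
   nonnegative.  Hence x is an equilibrium at the combined price with edge state
   (S, ell). *)

Section ConvexCombination.
Variables (R : realType) (t : R).
Hypothesis t01 : 0 <= t <= 1.

Lemma conv_ge (s y1 y2 : R) : s <= y1 -> s <= y2 -> s <= t * y1 + (1 - t) * y2.
Proof. by case/andP: t01 => t0 t1 sy1 sy2; nra. Qed.

Lemma conv_lt (s y1 y2 : R) : y1 < s -> y2 < s -> t * y1 + (1 - t) * y2 < s.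
Proof.
case/andP: t01 => t0 t1 y1s y2s.
have [->|t_neq0] := eqVneq t 0; first by lra.
have t_gt0 : 0 < t by rewrite lt_def t_neq0.
by nra.
Qed.

Lemma conv_eq0 (y1 y2 : R) : 0 <= y1 -> 0 <= y2 ->
  t * y1 + (1 - t) * y2 = 0 -> y1 = 0 \/ y2 = 0.
Proof.
case/andP: t01 => t0 t1 y1_ge0 y2_ge0 sum0.
have [t_eq0|t_neq0] := eqVneq t 0; first by right; rewrite t_eq0 in sum0; lra.
have t_gt0 : 0 < t by rewrite lt_def t_neq0.
by left; nra.
Qed.

End ConvexCombination.

Section ShortestWalks.
Variables (R : realType) (V E : finType) (tail head : E -> V).
Notation walk := (is_walk tail head).
Notation dist := (@is_dist R V E tail head).
Implicit Types (c : E -> R) (p q : seq E) (s u v w : V) (e f : E).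

Definition dist_tight c s e : Prop :=
  exists rv rw, dist c s (tail e) rv /\ dist c s (head e) rw /\ c e = rw - rv.

Lemma is_walk_cat u w v p q : walk u w p -> walk w v q -> walk u v (p ++ q).
Proof.
elim: p u => [|f p IHp] u /=; first by move/eqP->.
by case/andP=> -> /IHp; apply.
Qed.

Lemma is_walk_catP u v p q : walk u v (p ++ q) -> exists w, walk u w p /\ walk w v q.
Proof.
elim: p u => [|f p IHp] u /=; first by exists u; rewrite eqxx.
by case/andP=> -> /IHp.
Qed.

Lemma plen_nil c : plen c [::] = 0.
Proof. exact: big_nil. Qed.

Lemma plen_cons c f p : plen c (f :: p) = c f + plen c p.
Proof. exact: big_cons. Qed.

Lemma plen_cat c p q : plen c (p ++ q) = plen c p + plen c q.
Proof. exact: big_cat. Qed.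

Lemma plen_ge0 c p : (forall e, 0 <= c e) -> 0 <= plen c p.
Proof. by move=> c_ge0; apply: sumr_ge0. Qed.

Lemma plen_comb (t : R) c1 c2 p :
  plen (fun e => t * c1 e + (1 - t) * c2 e) p = t * plen c1 p + (1 - t) * plen c2 p.
Proof. by rewrite /plen big_split /= -!mulr_sumr. Qed.

Lemma is_dist_unique c u v r r' : dist c u v r -> dist c u v r' -> r = r'.
Proof.
move=> [[p [up <-]] minp] [[q [uq <-]] minq].
by apply/eqP; rewrite eq_le minp // minq.
Qed.

Lemma is_dist_refl c s : (forall e, 0 <= c e) -> dist c s s 0.
Proof.
move=> c_ge0; split; first by exists [::]; rewrite /= eqxx plen_nil.
by move=> p _; apply: plen_ge0.
Qed.

Lemma is_dist_triangle c s e rv rw :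
  dist c s (tail e) rv -> dist c s (head e) rw -> rw <= rv + c e.
Proof.
move=> [[p [sp <-]] _] [_ minw].
rewrite -[c e]addr0 -(plen_nil c) -plen_cons -plen_cat.
by apply: minw; apply: is_walk_cat sp _; rewrite /= !eqxx.
Qed.

Lemma dist_tight_shortest c s v p f : walk s v p ->
  (forall q, walk s v q -> plen c p <= plen c q) -> f \in p -> dist_tight c s f.
Proof.
move=> svp minp /splitPr split_p; case: split_p svp minp => p1 p2 svp minp.
have [w [sp1 /= /andP [/eqP tail_f hp2]]] := is_walk_catP svp.
exists (plen c p1), (plen c p1 + c f); split; [|split]; last by rewrite addrC addKr.
- split=> [|q sq]; first by exists p1; rewrite tail_f.
  have /minp : walk s v (q ++ f :: p2).
    by apply: is_walk_cat sq _; rewrite /= hp2 eqxx.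
  by rewrite !plen_cat !plen_cons lerD2r.
- split=> [|q sq].
    exists (rcons p1 f); rewrite -cats1 plen_cat plen_cons plen_nil addr0.
    by split=> //; apply: is_walk_cat sp1 _; rewrite /= tail_f !eqxx.
  have /minp := is_walk_cat sq hp2.
  by rewrite !plen_cat plen_cons addrA lerD2r.
Qed.

Lemma is_dist_tight_walk c s u ru v p : dist c s u ru -> walk u v p ->
  (forall f, f \in p -> dist_tight c s f) -> dist c s v (ru + plen c p).
Proof.
elim: p u ru => [|f p IHp] u ru dist_u /=.
  by move/eqP=> <- _; rewrite plen_nil addr0.
case/andP=> /eqP tail_f hp tight_p.
have [rv [rw [dist_v [dist_w cf]]]] := tight_p f (mem_head _ _).
rewrite tail_f in dist_v; have ru_eq := is_dist_unique dist_v dist_u.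
rewrite plen_cons addrA; apply: IHp hp _ => [|h hp_h].
  by rewrite cf -ru_eq addrC subrK.
by apply: tight_p; rewrite inE hp_h orbT.
Qed.

Lemma is_dist_comb (t : R) c1 c2 s v r1 r2 : 0 <= t <= 1 ->
  (forall e, 0 <= c2 e) -> (forall f, dist_tight c1 s f -> dist_tight c2 s f) ->
  dist c1 s v r1 -> dist c2 s v r2 ->
  dist (fun e => t * c1 e + (1 - t) * c2 e) s v (t * r1 + (1 - t) * r2).
Proof.
move=> /andP [t0 t1] c2_ge0 tight12 [[p [svp <-]] min1] dist2.
have tight2_p f : f \in p -> dist_tight c2 s f.
  by move=> /(dist_tight_shortest svp min1); apply: tight12.
have := is_dist_tight_walk (is_dist_refl s c2_ge0) svp tight2_p.
rewrite add0r => dist2_p; rewrite -(is_dist_unique dist2_p dist2).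
split=> [|q svq]; first by exists p; rewrite plen_comb.
have [_ min2] := dist2_p.
by rewrite plen_comb lerD // ler_wpM2l ?subr_ge0 //; [apply: min1 | apply: min2].
Qed.

Section NonnegativeCosts.
Variable c : E -> R.
Hypothesis c_ge0 : forall e, 0 <= c e.

Lemma uniq_walk_suffix w v p u : walk w v p -> uniq (w :: map head p) ->
  u \in w :: map head p ->
  exists q, [/\ walk u v q, uniq (u :: map head q) & plen c q <= plen c p].
Proof.
elim: p w => [|f p IHp] w /=.
  by move=> wv _; rewrite inE => /eqP ->; exists [::].
case/andP=> /eqP tail_f hp uniq_wp; have /andP [_ uniq_p] := uniq_wp.
rewrite inE; have [-> _|_ /= u_in] := eqVneq u w.
  by exists (f :: p); split; rewrite //= tail_f eqxx.
have [q [uq uniq_q le_q]] := IHp _ hp uniq_p u_in.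
by exists q; split=> //; rewrite plen_cons (le_trans le_q) // lerDr.
Qed.

Lemma is_walk_uniq_shorten u v q : walk u v q ->
  exists p, [/\ walk u v p, uniq (u :: map head p) & plen c p <= plen c q].
Proof.
elim: q u => [|f q IHq] u /=; first by move=> uv; exists [::].
case/andP=> /eqP tail_f /IHq [p [hp uniq_p le_p]].
have le_fq : plen c q <= plen c (f :: q) by rewrite plen_cons lerDr.
have [u_in|u_notin] := boolP (u \in head f :: map head p).
  have [p' [up' uniq_p' le_p']] := uniq_walk_suffix hp uniq_p u_in.
  by exists p'; split=> //; rewrite (le_trans le_p') // (le_trans le_p).
exists (f :: p); split; first by rewrite /= tail_f eqxx.
  by rewrite /= u_notin.
by rewrite !plen_cons lerD2l.
Qed.

End NonnegativeCosts.

Lemma uniq_walk_size u p : uniq (u :: map head p) -> (size p < #|V|)%N.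
Proof. by move/card_uniqP; rewrite /= size_map => <-; apply: max_card. Qed.

Lemma is_dist_exists c u v q : (forall e, 0 <= c e) -> walk u v q ->
  exists r, dist c u v r.
Proof.
move=> c_ge0 /(is_walk_uniq_shorten c_ge0) [q0 [uq0 uniq_q0 _]].
pose q0b : {bseq #|V| of E} := Bseq (ltnW (uniq_walk_size uniq_q0)).
have [p up minp] := @arg_minP _ _ _ q0b (fun p : {bseq #|V| of E} => walk u v p)
  (fun p : {bseq #|V| of E} => plen c p) uq0.
exists (plen c p); split=> [|q' uq']; first by exists p.
have [q1 [uq1 uniq_q1 le_q1]] := is_walk_uniq_shorten c_ge0 uq'.
exact: le_trans (minp (Bseq (ltnW (uniq_walk_size uniq_q1))) uq1) le_q1.
Qed.

Lemma dist_tight_comb (t : R) c1 c2 s e : 0 <= t <= 1 ->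
  (forall e, 0 <= c1 e) -> (forall e, 0 <= c2 e) ->
  (forall f, dist_tight c1 s f <-> dist_tight c2 s f) ->
  dist_tight (fun e => t * c1 e + (1 - t) * c2 e) s e <-> dist_tight c1 s e.
Proof.
move=> t01 c1_ge0 c2_ge0 tight12.
have dist_comb v r1 r2 := is_dist_comb (v := v) (r1 := r1) (r2 := r2) t01 c2_ge0
  (fun f => proj1 (tight12 f)).
split=> [[rv [rw [dist_v [dist_w ce]]]] | tight1].
  have [[pv [spv _]] _] := dist_v; have [[pw [spw _]] _] := dist_w.
  have [[r1v dist1_v] [r2v dist2_v]] :=
    (is_dist_exists c1_ge0 spv, is_dist_exists c2_ge0 spv).
  have [[r1w dist1_w] [r2w dist2_w]] :=
    (is_dist_exists c1_ge0 spw, is_dist_exists c2_ge0 spw).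
  have slack1 := is_dist_triangle dist1_v dist1_w.
  have slack2 := is_dist_triangle dist2_v dist2_w.
  rewrite (is_dist_unique dist_v (dist_comb _ _ _ dist1_v dist2_v)) in ce.
  rewrite (is_dist_unique dist_w (dist_comb _ _ _ dist1_w dist2_w)) in ce.
  have slack_comb : t * (r1v + c1 e - r1w) + (1 - t) * (r2v + c2 e - r2w) = 0.
    apply: etrans (subrr (t * c1 e + (1 - t) * c2 e)); rewrite {2}ce; ring.
  have [||slack1_0|slack2_0] := conv_eq0 t01 _ _ slack_comb; rewrite ?subr_ge0 //.
    by exists r1v, r1w; split=> //; split=> //; lra.
  by apply/tight12; exists r2v, r2w; split=> //; split=> //; lra.
have [rv1 [rw1 [dist1_v [dist1_w ce1]]]] := tight1.
have [rv2 [rw2 [dist2_v [dist2_w ce2]]]] := proj1 (tight12 e) tight1.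
exists (t * rv1 + (1 - t) * rv2), (t * rw1 + (1 - t) * rw2).
by split; [|split]; [exact: dist_comb | exact: dist_comb | rewrite /= ce1 ce2; ring].
Qed.

End ShortestWalks.

Section Network.
Variables (R : realType) (V E I : finType) (tail head : E -> V).
Variables (src snk : I -> V) (dem : I -> R) (K : nat).
Variables (sigma a b : E -> nat -> R) (g : E -> R).
Hypothesis hsig0 : forall e, sigma e 0%N = 0.
Hypothesis ha : forall e (k : nat), (k <= K)%N -> 0 < a e k.
Hypothesis hb : forall e (k : nat), (k <= K)%N -> 0 <= b e k.
Hypothesis hg : forall e, 0 <= g e.
Notation piece := (piece K sigma).
Notation edge_costs := (edge_costs K sigma a b g).
Notation feasible := (feasible tail head src snk dem).
Notation tight := (tight tail head src K sigma a b g).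
Notation dist_tight := (dist_tight tail head).

Lemma pieceP e y (k : 'I_K.+1) : 0 <= y ->
  piece e y = k <-> sigma e k <= y /\ forall j : 'I_K.+1, sigma e j <= y -> (j <= k)%N.
Proof.
move=> y_ge0; rewrite /Defs.piece.
case: arg_maxnP => [|m sm_y max_m]; first by rewrite hsig0.
split=> [<- | [sk_y max_k]]; first by split=> // j /max_m.
by apply: val_inj; apply/eqP; rewrite eqn_leq max_k //; apply: max_m.
Qed.

Lemma piece_conv (t : R) e y1 y2 k : 0 <= t <= 1 -> 0 <= y1 -> 0 <= y2 ->
  piece e y1 = k -> piece e y2 = k -> piece e (t * y1 + (1 - t) * y2) = k.
Proof.
move=> t01 y1_ge0 y2_ge0.
move=> /pieceP-/(_ y1_ge0) [sk_y1 max1] /pieceP-/(_ y2_ge0) [sk_y2 max2].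
have y_ge0 : 0 <= t * y1 + (1 - t) * y2 by apply: conv_ge.
apply/(pieceP e k y_ge0); split=> [|j sj_le]; first exact: conv_ge.
rewrite leqNgt; apply/negP => k_lt_j.
have [y1_lt y2_lt] : y1 < sigma e j /\ y2 < sigma e j.
  split; rewrite ltNge; apply: contraTN k_lt_j; rewrite -leqNgt.
    exact: max1.
  exact: max2.
by move: (conv_lt t01 y1_lt y2_lt); rewrite ltNge sj_le.
Qed.

Lemma load_comb (t : R) (x1 x2 : I -> E -> R) e :
  load (fun i e => t * x1 i e + (1 - t) * x2 i e) e = t * load x1 e + (1 - t) * load x2 e.
Proof. by rewrite /load big_split /= -!mulr_sumr. Qed.

Lemma load_ge0 x e : feasible x -> 0 <= load x e.
Proof. by case=> x_ge0 _; apply: sumr_ge0. Qed.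

Lemma feasible_comb (t : R) x1 x2 : 0 <= t <= 1 -> feasible x1 -> feasible x2 ->
  feasible (fun i e => t * x1 i e + (1 - t) * x2 i e).
Proof.
move=> t01 [x1_ge0 cons1] [x2_ge0 cons2]; split=> [i e|i v].
  by apply: conv_ge.
rewrite !big_split /= -!mulr_sumr.
have := cons1 i v; have := cons2 i v; nra.
Qed.

Lemma edge_costs_ge0 lam x e : 0 <= lam -> feasible x -> 0 <= edge_costs lam x e.
Proof.
move=> lam_ge0 feas_x; have k_le := leq_ord (piece e (load x e)).
rewrite /Defs.edge_costs /cost !addr_ge0 ?mulr_ge0 ?hb ?hg ?load_ge0 //.
exact/ltW/ha.
Qed.

Section SameEdgeState.
Variables (S : {set I * E}) (ell : {ffun E -> 'I_K.+1}).
Variables (t lam1 lam2 : R) (x1 x2 : I -> E -> R).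
Hypothesis t01 : 0 <= t <= 1.
Hypotheses (lam1_ge0 : 0 <= lam1) (lam2_ge0 : 0 <= lam2).
Hypothesis WE1 : is_WE tail head src snk dem K sigma a b g lam1 x1.
Hypothesis WE2 : is_WE tail head src snk dem K sigma a b g lam2 x2.
Hypothesis state1 : has_state tail head src sigma a b g lam1 x1 S ell.
Hypothesis state2 : has_state tail head src sigma a b g lam2 x2 S ell.
Let feas1 : feasible x1 := proj1 WE1.
Let feas2 : feasible x2 := proj1 WE2.
Let x := fun i e => t * x1 i e + (1 - t) * x2 i e.
Let lam := t * lam1 + (1 - t) * lam2.

Lemma piece_load_comb e : piece e (load x e) = ell e.
Proof.
rewrite load_comb; apply: piece_conv; rewrite ?load_ge0 //.
  by rewrite (proj2 state1).
by rewrite (proj2 state2).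
Qed.

Lemma edge_costs_comb :
  edge_costs lam x = fun e => t * edge_costs lam1 x1 e + (1 - t) * edge_costs lam2 x2 e.
Proof.
apply: functional_extensionality => e.
rewrite /Defs.edge_costs /cost piece_load_comb load_comb.
rewrite -(proj2 state1) -(proj2 state2) /lam; ring.
Qed.

Lemma tight_comb i e : tight lam x i e <-> (i, e) \in S.
Proof.
change (dist_tight (edge_costs lam x) (src i) e <-> (i, e) \in S).
have tight12 f : dist_tight (edge_costs lam1 x1) (src i) f <->
                 dist_tight (edge_costs lam2 x2) (src i) f.
  exact: iff_trans (iff_sym (proj1 state1 i f)) (proj1 state2 i f).
rewrite edge_costs_comb; apply: iff_trans _ (iff_sym (proj1 state1 i e)).
apply: dist_tight_comb tight12 => // f; exact: edge_costs_ge0.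
Qed.

Lemma is_WE_comb : is_WE tail head src snk dem K sigma a b g lam x.
Proof.
split=> [|i e x_pos]; first exact: feasible_comb.
apply/tight_comb.
have [x1_pos|x1_le0] := ltrP 0 (x1 i e); first exact/(proj1 state1)/(proj2 WE1).
have [x2_pos|x2_le0] := ltrP 0 (x2 i e); first exact/(proj1 state2)/(proj2 WE2).
by case/andP: t01 => t0 t1; exfalso; rewrite /x in x_pos; nra.
Qed.

Lemma has_state_comb : has_state tail head src sigma a b g lam x S ell.
Proof.
split=> [i e|e]; first exact: iff_sym (tight_comb i e).
by rewrite piece_load_comb.
Qed.

End SameEdgeState.
End Network.

Theorem lemma5p4 (R : realType) (V E I : finType) (tail head : E -> V)
  (src snk : I -> V) (dem : I -> R) (K : nat)
  (sigma a b : E -> nat -> R) (g : E -> R)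
  (hdem : forall i, 0 < dem i)
  (hsig0 : forall e, sigma e 0%N = 0)
  (hsig : forall e (k : nat), (k < K)%N -> sigma e k < sigma e k.+1)
  (ha : forall e (k : nat), (k <= K)%N -> 0 < a e k)
  (hb : forall e (k : nat), (k <= K)%N -> 0 <= b e k)
  (hg : forall e, 0 <= g e)
  (hcont : forall e (k : nat), (0 < k <= K)%N ->
     a e k.-1 * sigma e k + b e k.-1 = a e k * sigma e k + b e k)
  (S : {set I * E}) (ell : {ffun E -> 'I_K.+1}) :
  forall (lam1 lam2 t : R),
    Lambda tail head src snk dem sigma a b g S ell lam1 ->
    Lambda tail head src snk dem sigma a b g S ell lam2 ->
    0 <= t <= 1 ->
    Lambda tail head src snk dem sigma a b g S ell (t * lam1 + (1 - t) * lam2).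
Proof.
move=> lam1 lam2 t [lam1_ge0 [x1 [WE1 state1]]] [lam2_ge0 [x2 [WE2 state2]]] t01.
split; first exact: conv_ge.
exists (fun i e => t * x1 i e + (1 - t) * x2 i e); split.
  exact: (is_WE_comb hsig0 ha hb hg t01 lam1_ge0 lam2_ge0 WE1 WE2 state1 state2).
exact: (has_state_comb hsig0 ha hb hg t01 lam1_ge0 lam2_ge0 WE1 WE2 state1 state2).
Qed.
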